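(* Let $\varphi : X \to Y$ be a morphism in $\mathscr{C}$ with cokernel $\lambda : Y\to L$. Then $\varphi$ is $\{1,4\}$-invertible if and only if $\varphi$ is regular and $\lambda^{*}\lambda : L\to L$ is invertible. In this case, for every $\psi : Y\to X$ with $\varphi\psi\varphi=\varphi$, $$[1_Y-\lambda(\lambda^{*}\lambda)^{-1}\lambda^{*}]\,\psi$$ is a $\{1,4\}$-inverse of $\varphi$.
   Context: $\mathscr{C}$ is an additive category with an involution $*$: a map on morphisms sending $\varphi : X\to Y$ to $\varphi^* : Y \to X$ such that $(\varphi^* )^*=\varphi$, $(\varphi\psi)^*=\psi^*\varphi^*$ and $(\varphi+\phi)^*=\varphi^*+\phi^*$. Composition is written left to right: for $\varphi : X\to Y$ and $\psi : Y\to Z$, $\varphi\psi : X \to Z$ means ''first $\varphi$, then $\psi$''. A cokernel of $\varphi : X\to Y$ is a morphism $\lambda : Y\to L$ with $\varphi\lambda=0$ such that every $\beta : Y\to M$ with $\varphi\beta=0$ factors uniquely as $\beta=\lambda\beta'$. $\varphi$ is regular if there is $\chi : Y\to X$ with $\varphi\chi\varphi=\varphi$. A $\{1,4\}$-inverse of $\varphi$ is a morphism $\chi : Y\to X$ with $\varphi\chi\varphi=\varphi$ and $(\chi\varphi)^*=\chi\varphi$. A morphism is invertible if it has a two-sided inverse. *)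

From HB Require Import structures.
From mathcomp Require Export all_boot ssralg.
Set Implicit Arguments. Unset Strict Implicit. Unset Printing Implicit Defensive.
Import GRing.Theory.
Local Open Scope ring_scope.

(* An additive category with involution, composition written LEFT TO RIGHT:
   cmp f g : X -> Z for f : X -> Y, g : Y -> Z means "first f, then g". *)
Record AddCatInv := {
  Ob :> Type;
  Mor : Ob -> Ob -> zmodType;
  cmp : forall X Y Z : Ob, Mor X Y -> Mor Y Z -> Mor X Z;
  idm : forall X : Ob, Mor X X;
  adj : forall X Y : Ob, Mor X Y -> Mor Y X;
  compA : forall X Y Z W (f : Mor X Y) (g : Mor Y Z) (h : Mor Z W),
      cmp f (cmp g h) = cmp (cmp f g) h;
  comp1m : forall X Y (f : Mor X Y), cmp (idm X) f = f;
  compm1 : forall X Y (f : Mor X Y), cmp f (idm Y) = f;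
  compDl : forall X Y Z (f f' : Mor X Y) (g : Mor Y Z),
      cmp (f + f') g = cmp f g + cmp f' g;
  compDr : forall X Y Z (f : Mor X Y) (g g' : Mor Y Z),
      cmp f (g + g') = cmp f g + cmp f g';
  zob : Ob;
  zob_id : idm zob = 0;
  bip : Ob -> Ob -> Ob;
  bip_in1 : forall X Y, Mor X (bip X Y);
  bip_in2 : forall X Y, Mor Y (bip X Y);
  bip_pr1 : forall X Y, Mor (bip X Y) X;
  bip_pr2 : forall X Y, Mor (bip X Y) Y;
  bip_in1pr1 : forall X Y, cmp (bip_in1 X Y) (bip_pr1 X Y) = idm X;
  bip_in2pr2 : forall X Y, cmp (bip_in2 X Y) (bip_pr2 X Y) = idm Y;
  bip_in1pr2 : forall X Y, cmp (bip_in1 X Y) (bip_pr2 X Y) = 0;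
  bip_in2pr1 : forall X Y, cmp (bip_in2 X Y) (bip_pr1 X Y) = 0;
  bip_sum : forall X Y, cmp (bip_pr1 X Y) (bip_in1 X Y)
                        + cmp (bip_pr2 X Y) (bip_in2 X Y) = idm (bip X Y);
  starK : forall X Y (f : Mor X Y), adj (adj f) = f;
  star_comp : forall X Y Z (f : Mor X Y) (g : Mor Y Z),
      adj (cmp f g) = cmp (adj g) (adj f);
  starD : forall X Y (f g : Mor X Y), adj (f + g) = adj f + adj g
}.

Arguments cmp {C X Y Z} : rename.
Arguments idm {C} X : rename.
Arguments adj {C X Y} : rename.

Section Defs.
Variable C : AddCatInv.

Definition is_cokernel (X Y L : C) (phi : Mor X Y) (lam : Mor Y L) : Prop :=
  cmp phi lam = 0 /\
  forall (M : C) (beta : Mor Y M), cmp phi beta = 0 ->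
    exists! beta' : Mor L M, beta = cmp lam beta'.

Definition regular (X Y : C) (phi : Mor X Y) : Prop :=
  exists chi : Mor Y X, cmp (cmp phi chi) phi = phi.

Definition inverse14 (X Y : C) (phi : Mor X Y) (chi : Mor Y X) : Prop :=
  cmp (cmp phi chi) phi = phi /\ adj (cmp chi phi) = cmp chi phi.

Definition invertible14 (X Y : C) (phi : Mor X Y) : Prop :=
  exists chi : Mor Y X, inverse14 phi chi.

Definition is_inverse (X Y : C) (f : Mor X Y) (g : Mor Y X) : Prop :=
  cmp f g = idm X /\ cmp g f = idm Y.

Definition invertible (X Y : C) (f : Mor X Y) : Prop :=
  exists g : Mor Y X, is_inverse f g.
End Defs.

(* For an inner inverse psi of phi, the defect 1 - psi phi vanishes on phi, so
   1 - psi phi = lam g, and since lam is epi, g is a section of lam (g lam = 1).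
   If psi is a {1,4}-inverse, lam g is self-adjoint, and then g g* inverts lam* lam.
   Conversely, if mu inverts lam* lam, then P = 1 - lam mu lam* is self-adjoint,
   kills lam and fixes phi; for any inner inverse psi, psi phi = 1 - lam g gives
   P psi phi = P, so P psi is a {1,4}-inverse. *)

Import GRing.Theory.

Set Implicit Arguments.
Unset Strict Implicit.

Local Open Scope ring_scope.

Section AdditiveMaps.
Variables (U V : zmodType) (f : U -> V).
Hypothesis fD : {morph f : x y / x + y}.

Lemma morphD_0 : f 0 = 0.
Proof. by apply: (addIr (f 0)); rewrite -fD !add0r. Qed.

Lemma morphD_B : {morph f : x y / x - y}.
Proof. by move=> x y; apply: (addIr (f y)); rewrite -fD !subrK. Qed.

End AdditiveMaps.

Section Calculus.
Variable C : AddCatInv.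

Lemma cmp0m (X Y Z : C) (g : Mor Y Z) : cmp (0 : Mor X Y) g = 0.
Proof. exact: (morphD_0 (fun f f' => compDl f f' g)). Qed.

Lemma cmpm0 (X Y Z : C) (f : Mor X Y) : cmp f (0 : Mor Y Z) = 0.
Proof. exact: (morphD_0 (compDr f)). Qed.

Lemma cmpBm (X Y Z : C) (f f' : Mor X Y) (g : Mor Y Z) :
  cmp (f - f') g = cmp f g - cmp f' g.
Proof. exact: (morphD_B (fun f f' => compDl f f' g) f f'). Qed.

Lemma cmpmB (X Y Z : C) (f : Mor X Y) (g g' : Mor Y Z) :
  cmp f (g - g') = cmp f g - cmp f g'.
Proof. exact: (morphD_B (compDr f) g g'). Qed.

Lemma adjB (X Y : C) (f g : Mor X Y) : adj (f - g) = adj f - adj g.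
Proof. exact: (morphD_B (@starD C X Y) f g). Qed.

Lemma adj1 (X : C) : adj (idm X) = idm X.
Proof. by rewrite -[adj _]compm1 -{2}(starK (idm X)) -star_comp compm1 starK. Qed.

Lemma adj_gram (X Y : C) (f : Mor X Y) : adj (cmp (adj f) f) = cmp (adj f) f.
Proof. by rewrite star_comp starK. Qed.

Lemma inverse_adj_fixed (X : C) (f g : Mor X X) :
  adj f = f -> is_inverse f g -> adj g = g.
Proof.
move=> fsa [fg gf].
have gsa_f : cmp f (adj g) = idm X by rewrite -fsa -star_comp gf adj1.
by rewrite -[adj g]comp1m -gf -compA gsa_f compm1.
Qed.

Lemma is_inverse_gram (Y L : C) (lam : Mor Y L) (g : Mor L Y) :
  cmp g lam = idm L -> adj (cmp lam g) = cmp lam g ->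
  is_inverse (cmp (adj lam) lam) (cmp g (adj g)).
Proof.
move=> glam lamg_sa.
have adj_glam : cmp (adj lam) (adj g) = idm L by rewrite -star_comp glam adj1.
split.
- by rewrite -compA (compA lam) -lamg_sa star_comp !compA adj_glam comp1m.
- by rewrite -compA (compA (adj g)) -star_comp lamg_sa !compA glam comp1m.
Qed.

End Calculus.

Section Cokernel.
Variables (C : AddCatInv) (X Y L : C) (phi : Mor X Y) (lam : Mor Y L).
Hypothesis hcok : is_cokernel phi lam.

Lemma cokernel_factor (M : C) (beta : Mor Y M) :
  cmp phi beta = 0 -> exists beta' : Mor L M, beta = cmp lam beta'.
Proof. by case: hcok => _ hfac /hfac[beta' [-> _]]; exists beta'. Qed.

Lemma cokernel_epi (M : C) (a b : Mor L M) : cmp lam a = cmp lam b -> a = b.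
Proof.
case: hcok => philam hfac lama_lamb.
have [|c [_ c_uniq]] := hfac M (cmp lam a); first by rewrite compA philam cmp0m.
by rewrite -(c_uniq a erefl) -(c_uniq b lama_lamb).
Qed.

Lemma inner_inverse_defect (psi : Mor Y X) :
  cmp (cmp phi psi) phi = phi ->
  exists g : Mor L Y, idm Y - cmp psi phi = cmp lam g /\ cmp g lam = idm L.
Proof.
move=> hpsi.
have [g defect] : exists g : Mor L Y, idm Y - cmp psi phi = cmp lam g.
  by apply: cokernel_factor; rewrite cmpmB compm1 compA hpsi subrr.
exists g; split=> //; apply: cokernel_epi.
rewrite compA -defect cmpBm comp1m compm1 -compA.
by case: hcok => -> _; rewrite cmpm0 subr0.
Qed.

Lemma gram_invertible_of_inverse14 : invertible14 phi -> invertible (cmp (adj lam) lam).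
Proof.
case=> chi [hchi chi_sa]; have [g [defect glam]] := inner_inverse_defect hchi.
exists (cmp g (adj g)); apply: is_inverse_gram => //.
by rewrite -defect adjB adj1 chi_sa.
Qed.

Section Correction.
Variables (mu : Mor L L) (psi : Mor Y X).
Hypotheses (hmu : is_inverse (cmp (adj lam) lam) mu)
           (hpsi : cmp (cmp phi psi) phi = phi).

Let P := idm Y - cmp (cmp lam mu) (adj lam).

Lemma correction_fixes_phi : cmp phi P = phi.
Proof. by rewrite /P cmpmB compm1 !compA; case: hcok => -> _; rewrite !cmp0m subr0. Qed.

Lemma correction_kills_lam : cmp P lam = 0.
Proof. by case: hmu => _ mu_gram; rewrite /P cmpBm comp1m -!compA mu_gram compm1 subrr. Qed.

Lemma correction_adj : adj P = P.
Proof.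
have mu_sa := inverse_adj_fixed (adj_gram lam) hmu.
by rewrite /P adjB adj1 !star_comp starK mu_sa compA.
Qed.

Lemma correction_inverse14 : inverse14 phi (cmp P psi).
Proof.
have [g [defect _]] := inner_inverse_defect hpsi.
have Ppsiphi : cmp (cmp P psi) phi = P.
  have psiphi : cmp psi phi = idm Y - cmp lam g by rewrite -defect opprB addrC subrK.
  by rewrite -compA psiphi cmpmB compm1 compA correction_kills_lam cmp0m subr0.
split; first by rewrite compA correction_fixes_phi hpsi.
by rewrite Ppsiphi correction_adj.
Qed.

End Correction.

End Cokernel.

Theorem lemma3p2 (C : AddCatInv) (X Y L : C) (phi : Mor X Y) (lam : Mor Y L)
    (hcok : is_cokernel phi lam) :
  (invertible14 phi <-> regular phi /\ invertible (cmp (adj lam) lam)) /\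
  (forall mu : Mor L L, is_inverse (cmp (adj lam) lam) mu ->
   forall psi : Mor Y X, cmp (cmp phi psi) phi = phi ->
   inverse14 phi (cmp (idm Y - cmp (cmp lam mu) (adj lam)) psi)).
Proof.
have correction := correction_inverse14 hcok.
split=> [|mu hmu psi hpsi]; last exact: correction.
split=> [inv14 | [[psi hpsi] [mu hmu]]].
- split; last exact: gram_invertible_of_inverse14 hcok inv14.
  by case: inv14 => chi [hchi _]; exists chi.
- by eexists; exact: correction hmu hpsi.
Qed.
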